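(* (Quantum Efron–Stein inequality.) Let $\varrho=\rho_1\otimes\cdots\otimes\rho_n$ be a product state on $\mathcal K=\bigotimes_{i=1}^n\mathcal H_i$ (finite-dimensional Hilbert spaces) and let $X$ be an observable on $\mathcal K$. Then $$\mathrm{Var}_\varrho[X]\le\sum_{i=1}^n\mathbb E_\varrho[(\mathcal D_iX)^2].$$
   Context: $\mathbb E_\varrho[Y]=\mathrm{Tr}[\varrho Y]$ and $\mathrm{Var}_\varrho[X]=\mathbb E_\varrho[X^2]-\mathbb E_\varrho[X]^2$. For $i\in[n]$, $\mathcal E_iX=\mathrm{Tr}_i[(\rho_i\otimes I)X]$, regarded as an operator on $\mathcal K$ by tensoring with the identity on $\mathcal H_i$ (so $\mathcal E_i(Y_1\otimes\cdots\otimes Y_n)=\mathrm{Tr}[\rho_iY_i]\,Y_1\otimes\cdots\otimes I\otimes\cdots\otimes Y_n$ with $I$ in position $i$), and $\mathcal D_iX=X-\mathcal E_iX$. *)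

(* Finite-dimensional quantum operators over an abstract
   numeric closed field C (e.g. the complex numbers), with matrices indexed
   by a finite basis type. *)
From HB Require Import structures.
From mathcomp Require Import all_boot all_order all_algebra.
Set Implicit Arguments. Unset Strict Implicit. Unset Printing Implicit Defensive.
Import Order.TTheory GRing.Theory Num.Theory.
Local Open Scope ring_scope.

(* Basis of K = H_1 (x) ... (x) H_n, with H_i = C^(d i): tuples of basis indices. *)
Definition basis (n : nat) (d : 'I_n -> nat) : finType :=
  {dffun forall i : 'I_n, 'I_(d i)}.

(* Operators on the space with orthonormal basis indexed by T (matrix entries). *)
Definition op (C : Type) (T : finType) := T -> T -> C.

Section Ops.
Variables (C : numClosedFieldType) (T : finType).

Definition opmul (X Y : op C T) : op C T := fun a b => \sum_c X a c * Y c b.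
Definition optr (X : op C T) : C := \sum_a X a a.
Definition op_hermitian (X : op C T) : Prop := forall a b, X b a = (X a b)^*.

Definition expect (rho X : op C T) : C := optr (opmul rho X).
Definition variance (rho X : op C T) : C :=
  expect rho (opmul X X) - (expect rho X) ^+ 2.
End Ops.

Definition density_matrix (C : numClosedFieldType) (m : nat) (r : 'M[C]_m) : Prop :=
  (forall x y, r y x = (r x y)^*) /\
  (forall v : 'I_m -> C, 0 <= \sum_x \sum_y (v x)^* * r x y * v y) /\
  \tr r = 1.

Section Product.
Variables (C : numClosedFieldType) (n : nat) (d : 'I_n -> nat).
Variable rho : forall i : 'I_n, 'M[C]_(d i).

Definition prod_state : op C (basis d) :=
  fun a b => \prod_(i < n) rho i (a i) (b i).

(* E_i X = Tr_i[(rho_i (x) I) X], tensored with the identity on H_i: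
   (E_i X)(a,b) = [a_i = b_i] * sum_{k,l} rho_i(k,l) X(a[i:=l], b[i:=k]). *)
Definition condE (i : 'I_n) (X : op C (basis d)) : op C (basis d) :=
  fun a b => (a i == b i)%:R *
    \sum_(a' : basis d) \sum_(b' : basis d)
      (if [forall j, (j != i) ==> ((a' j == a j) && (b' j == b j))]
       then rho i (b' i) (a' i) * X a' b' else 0).

Definition condD (i : 'I_n) (X : op C (basis d)) : op C (basis d) :=
  fun a b => X a b - condE i X a b.
End Product.

(* Let E_S trace out the sites in S against the rho_i, so that E_{i} is condE i
   and E_S E_R = E_(S u R).  For the inner product
   <X, Y> = Tr[rho X^* Y], which is positive semidefinite because rho is a
   tensor product of positive matrices, every E_S is self-adjoint and
   idempotent, i.e. an orthogonal projection.  With F_m = E_{0, ..., m-1} the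
   residuals X - F_m X satisfy X - F_(m+1) X = (X - F_m X) + F_m (D_m X), the
   two summands being orthogonal; Pythagoras and the contraction
   |F_m Y| <= |Y| give |X - F_m X|^2 <= sum_(i < m) |D_i X|^2.  For m = n,
   F_n X = E[X] I, so the left side is Var[X], and |D_i X|^2 = E[(D_i X)^2]
   for hermitian X. *)

From HB Require Import structures.
From mathcomp Require Import all_boot all_order all_algebra.
From mathcomp Require Import ring sesquilinear spectral.
From Stdlib Require Import FunctionalExtensionality.
Set Implicit Arguments. Unset Strict Implicit. Unset Printing Implicit Defensive.
Import Order.TTheory GRing.Theory Num.Theory.
Local Open Scope ring_scope.
Local Open Scope sesquilinear_scope.

Lemma sum_prod_dffun (R : comNzRingType) (I : finType) (T_ : I -> finType)
  (F : forall i : I, T_ i -> R) :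
  \sum_(a : {dffun forall i : I, T_ i}) \prod_(i : I) F i (a i) =
  \prod_(i : I) \sum_(k : T_ i) F i k.
Proof.
pose P_ := fun i => [ffun k : T_ i => F i k].
transitivity (\prod_(i : I) \sum_(k : T_ i) P_ i k); last first.
  by apply: eq_bigr => i _; apply: eq_bigr => k _; rewrite ffunE.
under eq_bigr => i _ do rewrite (big_tag (fun i (k : T_ i) => P_ i k) i).
rewrite bigA_distr_big_dep -(big_fprod _ _ P_).
rewrite (reindex (@fprod_of_dffun _ T_)); last exact/onW_bij/fprod_of_dffun_bij.
apply: eq_bigr => a _; apply: eq_bigr => i _.
by rewrite ffunE /fprod_of_dffun fprodE.
Qed.

Lemma sum2_prod_dffun (R : comNzRingType) (I : finType) (T_ : I -> finType)
  (F : forall i : I, T_ i -> T_ i -> R) :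
  \sum_(a : {dffun forall i : I, T_ i}) \sum_(b : {dffun forall i : I, T_ i})
     \prod_(i : I) F i (a i) (b i) =
  \prod_(i : I) \sum_(k : T_ i) \sum_(l : T_ i) F i k l.
Proof.
rewrite -(sum_prod_dffun (fun i k => \sum_l F i k l)).
by apply: eq_bigr => a _; rewrite (sum_prod_dffun (fun i l => F i (a i) l)).
Qed.

Lemma eq_dffunE (I : finType) (T_ : I -> finType) (a b : {dffun forall i : I, T_ i}) :
  [forall i, a i == b i] = (a == b).
Proof. by apply/forallP/eqP => [eq_ab|-> //]; apply/ffunP => i; apply/eqP. Qed.

Lemma prodr_natb (R : comNzRingType) (I : finType) (P B : pred I) :
  \prod_(i | P i) ((B i)%:R : R) = ([forall i, P i ==> B i])%:R.
Proof.
case: forallP => [PB | /forallP].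
  by rewrite big1 // => i Pi; rewrite (implyP (PB i) Pi).
rewrite negb_forall => /existsP[i]; rewrite negb_imply => /andP[Pi /negbTE Bi].
by rewrite (bigD1 i) //= Bi mul0r.
Qed.

Lemma exchange_big22 (R : nmodType) (I J : finType) (F : I -> I -> J -> J -> R) :
  \sum_r \sum_s \sum_p \sum_q F r s p q = \sum_p \sum_q \sum_r \sum_s F r s p q.
Proof.
under eq_bigr => r _ do rewrite exchange_big.
rewrite exchange_big; apply: eq_bigr => p _.
under eq_bigr => r _ do rewrite exchange_big.
by rewrite exchange_big.
Qed.

Lemma sum_delta (R : nmodType) (I : finType) (x : I) (F : I -> R) :
  (forall k, k != x -> F k = 0) -> \sum_k F k = F x.
Proof. by move=> F0; rewrite (bigD1 x) //= big1 ?addr0. Qed.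
Arguments sum_delta {R I} x {F}.

Section Superoperators.
Variables (C : numClosedFieldType) (T : finType).
Implicit Types (X Y Z s : op C T) (K L : T -> T -> T -> T -> C).

Lemma op_ext X Y : (forall a b, X a b = Y a b) -> X = Y.
Proof.
by move=> eqXY; do 2 apply: functional_extensionality => ?; apply: eqXY.
Qed.

Definition opadd X Y : op C T := fun a b => X a b + Y a b.
Definition opsub X Y : op C T := fun a b => X a b - Y a b.
Definition opscalar (c : C) : op C T := fun a b => (a == b)%:R * c.

Definition superop K X : op C T := fun a b => \sum_a' \sum_b' K a b a' b' * X a' b'.

Definition kernel_comp K L : T -> T -> T -> T -> C :=
  fun a b a'' b'' => \sum_a' \sum_b' K a b a' b' * L a' b' a'' b''.

Lemma superop_comp K L X : superop K (superop L X) = superop (kernel_comp K L) X.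
Proof.
apply: op_ext => a b; rewrite /superop /kernel_comp.
transitivity (\sum_a' \sum_b' \sum_a'' \sum_b''
                K a b a' b' * L a' b' a'' b'' * X a'' b'').
  apply: eq_bigr => a' _; apply: eq_bigr => b' _.
  rewrite mulr_sumr; apply: eq_bigr => a'' _.
  by rewrite mulr_sumr; apply: eq_bigr => b'' _; rewrite mulrA.
rewrite exchange_big22; apply: eq_bigr => a'' _; apply: eq_bigr => b'' _.
by rewrite mulr_suml; apply: eq_bigr => a' _; rewrite mulr_suml.
Qed.

Lemma superopB K X Y : superop K (opsub X Y) = opsub (superop K X) (superop K Y).
Proof.
apply: op_ext => a b; rewrite /superop /opsub -sumrB; apply: eq_bigr => a' _.
by rewrite -sumrB; apply: eq_bigr => b' _; rewrite mulrBr.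
Qed.

Lemma superop_hermitian K X :
  (forall a b a' b', (K a b b' a')^* = K b a a' b') ->
  op_hermitian X -> op_hermitian (superop K X).
Proof.
move=> K_adj herX a b; rewrite /superop rmorph_sum.
under [RHS]eq_bigr => a' _ do rewrite rmorph_sum.
rewrite [RHS]exchange_big; apply: eq_bigr => a' _; apply: eq_bigr => b' _.
by rewrite rmorphM /= K_adj herX.
Qed.

(* [gns s X Y] is the GNS inner product Tr[s X^* Y]. *)
Definition gns s X Y : C := \sum_c \sum_a \sum_b s a b * (X c b)^* * Y c a.

Lemma gns_superopl s K X Y : gns s (superop K X) Y =
  \sum_p \sum_q (X p q)^* *
    \sum_r \sum_t (\sum_b s t b * (K r b p q)^*) * Y r t.
Proof.
rewrite /gns; transitivity (\sum_c \sum_a \sum_p \sum_q \sum_b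
                 s a b * (K c b p q)^* * (X p q)^* * Y c a).
  apply: eq_bigr => c _; apply: eq_bigr => a _.
  under eq_bigr => b _ do rewrite /superop rmorph_sum mulr_sumr mulr_suml.
  rewrite exchange_big; apply: eq_bigr => p _.
  under eq_bigr => b _ do rewrite rmorph_sum mulr_sumr mulr_suml.
  rewrite exchange_big; apply: eq_bigr => q _.
  by apply: eq_bigr => b _; rewrite rmorphM /= !mulrA.
rewrite exchange_big22; apply: eq_bigr => p _; apply: eq_bigr => q _.
rewrite mulr_sumr; apply: eq_bigr => r _; rewrite mulr_sumr; apply: eq_bigr => t _.
by rewrite !mulr_suml mulr_sumr; apply: eq_bigr => b _; ring.
Qed.

Lemma gns_superopr s K X Y : gns s X (superop K Y) =
  \sum_p \sum_q (X p q)^* *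
    \sum_r \sum_t (\sum_a s a q * K p a r t) * Y r t.
Proof.
rewrite /gns; apply: eq_bigr => p _; rewrite exchange_big; apply: eq_bigr => q _.
rewrite mulr_sumr; under [RHS]eq_bigr => r _ do rewrite mulr_sumr.
transitivity (\sum_a \sum_r \sum_t (X p q)^* * (s a q * K p a r t * Y r t)).
  apply: eq_bigr => a _; rewrite /superop mulr_sumr; apply: eq_bigr => r _.
  by rewrite mulr_sumr; apply: eq_bigr => t _; ring.
rewrite exchange_big; apply: eq_bigr => r _; rewrite exchange_big.
by apply: eq_bigr => t _; rewrite -mulr_sumr -mulr_suml.
Qed.

Lemma gns_superop_adj s K X Y :
  (forall p q r t, \sum_b s t b * (K r b p q)^* = \sum_a s a q * K p a r t) ->
  gns s (superop K X) Y = gns s X (superop K Y).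
Proof.
move=> K_adj; rewrite gns_superopl gns_superopr.
by under eq_bigr => p _ do under eq_bigr => q _ do under eq_bigr => r _ do
  under eq_bigr => t _ do rewrite K_adj.
Qed.

Lemma gnsDl s X Y Z : gns s (opadd X Y) Z = gns s X Z + gns s Y Z.
Proof.
rewrite /gns -big_split; apply: eq_bigr => c _; rewrite -big_split.
apply: eq_bigr => a _; rewrite -big_split; apply: eq_bigr => b _.
by rewrite rmorphD /=; ring.
Qed.

Lemma gnsBl s X Y Z : gns s (opsub X Y) Z = gns s X Z - gns s Y Z.
Proof.
rewrite /gns -sumrB; apply: eq_bigr => c _; rewrite -sumrB.
apply: eq_bigr => a _; rewrite -sumrB; apply: eq_bigr => b _.
by rewrite rmorphB /=; ring.
Qed.

Lemma gns_scalar s X c : op_hermitian X -> gns s X (opscalar c) = c * expect s X.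
Proof.
move=> herX; rewrite /gns /expect /optr /opmul /opscalar exchange_big mulr_sumr.
apply: eq_bigr => a _; rewrite (bigD1 a) //= [Z in _ + Z]big1 ?addr0; last first.
  by move=> e ne_ea; apply: big1 => b _; rewrite (negbTE ne_ea) !mul0r mulr0.
by rewrite mulr_sumr; apply: eq_bigr => b _; rewrite eqxx mulr1n mul1r -herX mulrC.
Qed.

Lemma expect_sqr s X : op_hermitian X -> expect s (opmul X X) = gns s X X.
Proof.
move=> herX; rewrite /expect /optr /opmul /gns [RHS]exchange_big.
apply: eq_bigr => a _; rewrite [RHS]exchange_big; apply: eq_bigr => b _.
by rewrite mulr_sumr; apply: eq_bigr => c _; rewrite -herX; ring.
Qed.

Definition op_psd s : Prop :=
  forall v : T -> C, 0 <= \sum_a \sum_b (v a)^* * s a b * v b.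

Lemma gns_ge0 s X : op_psd s -> 0 <= gns s X X.
Proof.
move=> psd_s; apply: sumr_ge0 => c _.
have -> : \sum_a \sum_b s a b * (X c b)^* * X c a =
          \sum_a \sum_b ((X c a)^*)^* * s a b * (X c b)^*.
  by apply: eq_bigr => a _; apply: eq_bigr => b _; rewrite conjCK; ring.
exact: psd_s.
Qed.

Lemma op_psd_gram (I : finType) (L : I -> C) (V : I -> T -> C) :
  (forall k, 0 <= L k) -> op_psd (fun a b => \sum_k L k * (V k a)^* * V k b).
Proof.
move=> L_ge0 v; pose w k := \sum_a (V k a * v a)^*.
have -> : \sum_a \sum_b (v a)^* * (\sum_k L k * (V k a)^* * V k b) * v b =
          \sum_k L k * (w k * (w k)^*).
  transitivity (\sum_k \sum_a \sum_b L k * ((V k a * v a)^* * (V k b * v b))).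
    under eq_bigr => a _ do under eq_bigr => b _ do rewrite mulr_sumr mulr_suml.
    under eq_bigr => a _ do rewrite exchange_big.
    rewrite exchange_big; apply: eq_bigr => k _; apply: eq_bigr => a _.
    by apply: eq_bigr => b _; rewrite rmorphM /=; ring.
  apply: eq_bigr => k _; rewrite /w rmorph_sum big_distrlr mulr_sumr /=.
  by apply: eq_bigr => a _; rewrite mulr_sumr; apply: eq_bigr => b _; rewrite conjCK.
by apply: sumr_ge0 => k _; rewrite mulr_ge0 ?mul_conjC_ge0.
Qed.

Section Hermitian.
Variable s : op C T.
Hypothesis her_s : op_hermitian s.

Lemma gns_conj X Y : gns s Y X = (gns s X Y)^*.
Proof.
rewrite /gns rmorph_sum; apply: eq_bigr => c _.
rewrite rmorph_sum exchange_big; apply: eq_bigr => a _.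
rewrite rmorph_sum; apply: eq_bigr => b _.
by rewrite !rmorphM /= -her_s conjCK; ring.
Qed.

Lemma gnsDr X Y Z : gns s Z (opadd X Y) = gns s Z X + gns s Z Y.
Proof. by rewrite gns_conj gnsDl rmorphD /= -!gns_conj. Qed.

Lemma gnsBr X Y Z : gns s Z (opsub X Y) = gns s Z X - gns s Z Y.
Proof. by rewrite gns_conj gnsBl rmorphB /= -!gns_conj. Qed.

Lemma gns_pythagoras X Y : gns s X Y = 0 ->
  gns s (opadd X Y) (opadd X Y) = gns s X X + gns s Y Y.
Proof.
move=> XY0; rewrite gnsDl !gnsDr XY0 [gns s Y X]gns_conj XY0 conjC0.
by rewrite addr0 add0r.
Qed.

End Hermitian.

Section Projection.
Variables (s : op C T) (P : op C T -> op C T).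
Hypotheses (her_s : op_hermitian s) (psd_s : op_psd s).
Hypothesis P_adj : forall X Y, gns s (P X) Y = gns s X (P Y).
Hypothesis P_idem : forall X, P (P X) = P X.

Lemma gns_proj_ortho X Y : gns s (opsub X (P X)) (P Y) = 0.
Proof. by rewrite gnsBl P_adj P_idem subrr. Qed.

Lemma gns_proj_residual X :
  gns s (opsub X (P X)) (opsub X (P X)) = gns s X X - gns s X (P X).
Proof. by rewrite gnsBr // gns_proj_ortho subr0 gnsBl P_adj. Qed.

Lemma gns_proj_contract X : gns s (P X) (P X) <= gns s X X.
Proof.
rewrite P_adj P_idem -subr_ge0 -gns_proj_residual; exact: gns_ge0.
Qed.

End Projection.
End Superoperators.

Section SpectralPsd.
Variables (C : numClosedFieldType) (m : nat) (r : 'M[C]_m).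
Hypothesis her_r : op_hermitian r.
Local Notation P := (spectralmx r).
Local Notation lam := (spectral_diag r).

Lemma op_hermitian_normalmx : r \is normalmx.
Proof.
apply/normalmxP.
by have -> : r ^t* = r by apply/matrixP => x y; rewrite !mxE -her_r.
Qed.

Lemma spectral_conj_diag : r = P ^t* *m diag_mx lam *m P.
Proof.
rewrite -invmx_unitary ?spectral_unitarymx //.
exact/orthomx_spectralP/op_hermitian_normalmx.
Qed.

Lemma spectral_entry x y : r x y = \sum_k (P k x)^* * lam 0 k * P k y.
Proof.
rewrite {1}spectral_conj_diag mul_mx_diag !mxE.
by apply: eq_bigr => k _; rewrite !mxE.
Qed.

Lemma spectral_diagonalize : P *m r *m P ^t* = diag_mx lam.
Proof.
rewrite [X in _ *m X *m _]spectral_conj_diag !mulmxA.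
by rewrite (unitarymxP (spectral_unitarymx r)) mul1mx mulmxtVK ?spectral_unitarymx.
Qed.

Lemma spectral_diag_ge0 k : op_psd r -> 0 <= lam 0 k.
Proof.
move=> psd_r; have /matrixP/(_ k k) := spectral_diagonalize.
rewrite !mxE eqxx mulr1n => <-.
under eq_bigr => j _ do rewrite !mxE mulr_suml.
rewrite exchange_big; move: (psd_r (fun y => (P k y)^*)) => /=.
by under eq_bigr => a _ do under eq_bigr => b _ do rewrite conjCK.
Qed.

End SpectralPsd.

Section ProductState.
Variables (C : numClosedFieldType) (n : nat) (d : 'I_n -> nat).
Variable rho : forall i : 'I_n, 'M[C]_(d i).
Hypothesis rho_her : forall i, op_hermitian (rho i).
Hypothesis rho_tr : forall i, \tr (rho i) = 1.
Local Notation T := (basis d).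
Local Notation state := (prod_state rho).

Definition site_kernel (S : {set 'I_n}) j (x y x' y' : 'I_(d j)) : C :=
  if j \in S then (x == y)%:R * rho j y' x' else (x' == x)%:R * (y' == y)%:R.
Arguments site_kernel S j x y x' y' : clear implicits.

Lemma site_kernel_comp S R j x y x'' y'' :
  \sum_k \sum_l site_kernel S j x y k l * site_kernel R j k l x'' y'' =
  site_kernel (S :|: R) j x y x'' y''.
Proof.
rewrite /site_kernel in_setU; case: (j \in S) => /=; last first.
  rewrite (sum_delta x); last first.
    by move=> k /negbTE ne; apply: big1 => l _; rewrite ne !mul0r.
  rewrite (sum_delta y); last by move=> l /negbTE->; rewrite mulr0 mul0r.
  by rewrite !eqxx !mulr1n !mul1r.
case: (j \in R).
- under eq_bigr => k _.
    rewrite (sum_delta k); last first.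
      by move=> l; rewrite eq_sym => /negbTE->; rewrite mul0r mulr0.
    over.
  transitivity ((x == y)%:R * rho j y'' x'' * \tr (rho j)).
    by rewrite mulr_sumr; apply: eq_bigr => k _; rewrite eqxx mulr1n mul1r mulrAC.
  by rewrite rho_tr mulr1.
- rewrite (sum_delta x''); last first.
    move=> k; rewrite eq_sym => /negbTE ne.
    by apply: big1 => l _; rewrite ne !mul0r mulr0.
  rewrite (sum_delta y''); last first.
    by move=> l; rewrite eq_sym => /negbTE->; rewrite !mulr0.
  by rewrite !eqxx !mulr1n !mulr1.
Qed.

Definition condEset (S : {set 'I_n}) : op C T -> op C T :=
  superop (fun a b a' b' : T => \prod_j site_kernel S j (a j) (b j) (a' j) (b' j)).

Lemma condEset_comp S R X : condEset S (condEset R X) = condEset (S :|: R) X.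
Proof.
rewrite /condEset superop_comp; apply: op_ext => a b; rewrite /superop /kernel_comp.
apply: eq_bigr => a'' _; apply: eq_bigr => b'' _; congr (_ * _) => /=.
under eq_bigr => a' _ do under eq_bigr => b' _ do rewrite -big_split.
rewrite (sum2_prod_dffun (fun j k l =>
  site_kernel S j (a j) (b j) k l * site_kernel R j k l (a'' j) (b'' j))).
by apply: eq_bigr => j _; rewrite site_kernel_comp.
Qed.

Lemma condEsetB S X Y :
  condEset S (opsub X Y) = opsub (condEset S X) (condEset S Y).
Proof. exact: superopB. Qed.

Lemma condEset_idem S X : condEset S (condEset S X) = condEset S X.
Proof. by rewrite condEset_comp setUid. Qed.

Lemma condE_condEset i X : condE rho i X = condEset [set i] X.
Proof.
apply: op_ext => a b; rewrite /condE /condEset /superop mulr_sumr.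
apply: eq_bigr => a' _; rewrite mulr_sumr; apply: eq_bigr => b' _.
rewrite (bigD1 i) //= {1}/site_kernel in_set1 eqxx.
rewrite (eq_bigr (fun j => ((a' j == a j) && (b' j == b j))%:R)); last first.
  by move=> j ne_ji; rewrite /site_kernel in_set1 (negbTE ne_ji) -natrM mulnb.
by rewrite prodr_natb; case: [forall _, _]; rewrite /=; ring.
Qed.

Lemma prod_site_kernel0 (a b a' b' : T) :
  \prod_j site_kernel set0 j (a j) (b j) (a' j) (b' j) = (a' == a)%:R * (b' == b)%:R.
Proof.
rewrite (eq_bigr (fun j => (a' j == a j)%:R * (b' j == b j)%:R)); last first.
  by move=> j _; rewrite /site_kernel in_set0.
by rewrite big_split /= !prodr_natb -!eq_dffunE.
Qed.

Lemma condEset0 X : condEset set0 X = X.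
Proof.
apply: op_ext => a b; rewrite /condEset /superop.
under eq_bigr => a' _ do under eq_bigr => b' _ do rewrite prod_site_kernel0.
rewrite (sum_delta a); last first.
  by move=> a' /negbTE ne; apply: big1 => b' _; rewrite ne !mul0r.
rewrite (sum_delta b); last by move=> b' /negbTE ne; rewrite ne mulr0 mul0r.
by rewrite !eqxx !mulr1n !mul1r.
Qed.

Lemma prod_site_kernelT (a b a' b' : T) :
  \prod_j site_kernel setT j (a j) (b j) (a' j) (b' j) = (a == b)%:R * state b' a'.
Proof.
rewrite (eq_bigr (fun j => (a j == b j)%:R * rho j (b' j) (a' j))); last first.
  by move=> j _; rewrite /site_kernel in_setT.
by rewrite big_split /= prodr_natb -eq_dffunE.
Qed.

Lemma condEsetT X : condEset setT X = opscalar (expect state X).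
Proof.
apply: op_ext => a b; rewrite /condEset /superop /opscalar /expect /optr /opmul.
under eq_bigr => a' _ do under eq_bigr => b' _ do rewrite prod_site_kernelT.
rewrite mulr_sumr exchange_big; apply: eq_bigr => b' _.
by rewrite mulr_sumr; apply: eq_bigr => a' _; rewrite mulrA.
Qed.

Lemma site_kernel_conj S j x y x' y' :
  (site_kernel S j x y y' x')^* = site_kernel S j y x x' y'.
Proof.
rewrite /site_kernel; case: (j \in S); rewrite rmorphM /= !conjC_nat.
  by rewrite -rho_her eq_sym.
by rewrite mulrC.
Qed.

Lemma condEset_hermitian S X : op_hermitian X -> op_hermitian (condEset S X).
Proof.
apply: superop_hermitian => a b a' b'; rewrite rmorph_prod.
by apply: eq_bigr => j _; exact: site_kernel_conj.
Qed.

Lemma condD_hermitian i X : op_hermitian X -> op_hermitian (condD rho i X).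
Proof.
move=> herX a b; rewrite /condD condE_condEset rmorphB /= -herX.
by rewrite -(condEset_hermitian _ herX).
Qed.

Lemma site_kernel_adj S j (p q r t : 'I_(d j)) :
  \sum_k rho j t k * (site_kernel S j r k p q)^* =
  \sum_k rho j k q * site_kernel S j p k r t.
Proof.
rewrite /site_kernel; case: (j \in S).
  rewrite (sum_delta r); last first.
    by move=> k; rewrite eq_sym => /negbTE->; rewrite mul0r rmorph0 mulr0.
  rewrite (sum_delta p); last first.
    by move=> k; rewrite eq_sym => /negbTE->; rewrite mul0r mulr0.
  by rewrite !eqxx !mulr1n !mul1r -rho_her mulrC.
rewrite (sum_delta q); last first.
  by move=> k; rewrite eq_sym => /negbTE->; rewrite mulr0 rmorph0 mulr0.
rewrite (sum_delta t); last by move=> k; rewrite eq_sym => /negbTE->; rewrite !mulr0.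
by rewrite !eqxx !mulr1n !mulr1 rmorph_nat eq_sym.
Qed.

Lemma condEset_adj S X Y : gns state (condEset S X) Y = gns state X (condEset S Y).
Proof.
apply: gns_superop_adj => p q r t.
under eq_bigr => b _ do rewrite rmorph_prod -big_split /=.
rewrite (sum_prod_dffun (fun j k =>
  rho j (t j) k * (site_kernel S j (r j) k (p j) (q j))^*)).
under [RHS]eq_bigr => a _ do rewrite -big_split /=.
rewrite (sum_prod_dffun (fun j k =>
  rho j k (q j) * site_kernel S j (p j) k (r j) (t j))).
by apply: eq_bigr => j _; rewrite site_kernel_adj.
Qed.

Lemma prod_state_hermitian : op_hermitian state.
Proof.
by move=> a b; rewrite /prod_state rmorph_prod; apply: eq_bigr => j _; exact: rho_her.
Qed.

Lemma prod_state_spectral a b : state a b =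
  \sum_(k : T) (\prod_j spectral_diag (rho j) 0 (k j)) *
     (\prod_j spectralmx (rho j) (k j) (a j))^* *
     \prod_j spectralmx (rho j) (k j) (b j).
Proof.
rewrite /prod_state; under eq_bigr => j _ do rewrite (spectral_entry (@rho_her j)).
rewrite -(sum_prod_dffun (fun j k => (spectralmx (rho j) k (a j))^* *
  spectral_diag (rho j) 0 k * spectralmx (rho j) k (b j))).
apply: eq_bigr => k _; rewrite rmorph_prod -!big_split /=.
by apply: eq_bigr => j _; ring.
Qed.

Hypothesis rho_psd : forall i, op_psd (rho i).

Lemma prod_state_psd : op_psd state.
Proof.
rewrite (op_ext prod_state_spectral); apply: op_psd_gram => k; apply: prodr_ge0 => j _.
exact: spectral_diag_ge0 (@rho_her j) _ (@rho_psd j).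
Qed.

Definition prefix (m : nat) : {set 'I_n} := [set j : 'I_n | (j < m)%N].

Lemma prefix0 : prefix 0 = set0.
Proof. by apply/setP => j; rewrite !inE. Qed.

Lemma prefixS (i : 'I_n) : prefix i.+1 = prefix i :|: [set i].
Proof. by apply/setP => j; rewrite !inE ltnS leq_eqVlt orbC. Qed.

Lemma prefix_n : prefix n = [set: 'I_n].
Proof. by apply/setP => j; rewrite !inE ltn_ord. Qed.

Definition residual m X := opsub X (condEset (prefix m) X).

Lemma residualS (i : 'I_n) X :
  residual i.+1 X = opadd (residual i X) (condEset (prefix i) (condD rho i X)).
Proof.
rewrite /condD condE_condEset -/(opsub _ _) condEsetB condEset_comp -prefixS.
by apply: op_ext => a b; rewrite /residual /opadd /opsub addrA subrK.
Qed.

Section Martingale.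
Variable X : op C T.
Hypothesis herX : op_hermitian X.

Lemma variance_residual : variance state X = gns state (residual n X) (residual n X).
Proof.
rewrite /residual.
rewrite (gns_proj_residual prod_state_hermitian (condEset_adj _) (condEset_idem _)).
by rewrite prefix_n condEsetT gns_scalar // /variance expect_sqr // expr2.
Qed.

Lemma residual_le m : (m <= n)%N ->
  gns state (residual m X) (residual m X) <=
  \sum_(i in prefix m) expect state (opmul (condD rho i X) (condD rho i X)).
Proof.
elim: m => [_|m IHm lt_mn].
  by rewrite /residual prefix0 condEset0 big_set0 gnsBl subrr.
pose i := Ordinal lt_mn.
have ortho : gns state (residual i X) (condEset (prefix i) (condD rho i X)) = 0.
  exact: (gns_proj_ortho (condEset_adj _) (condEset_idem _)).
rewrite (residualS i) (gns_pythagoras prod_state_hermitian ortho).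
rewrite (prefixS i) setUC big_setU1 ?inE ?ltnn //= addrC.
apply: lerD; first exact: IHm (ltnW lt_mn).
rewrite expect_sqr; last exact: condD_hermitian.
exact: (gns_proj_contract prod_state_hermitian prod_state_psd
                          (condEset_adj _) (condEset_idem _)).
Qed.

Lemma variance_le_sum_condD :
  variance state X <= \sum_(i < n) expect state (opmul (condD rho i X) (condD rho i X)).
Proof.
rewrite variance_residual; apply: le_trans (residual_le (leqnn n)) _.
by rewrite prefix_n (eq_bigl xpredT) // => i; rewrite in_setT.
Qed.

End Martingale.
End ProductState.

Theorem theorem6p6 (C : numClosedFieldType) (n : nat) (d : 'I_n -> nat)
    (rho : forall i : 'I_n, 'M[C]_(d i))
    (hrho : forall i : 'I_n, density_matrix (rho i))
    (X : op C (basis d)) (hX : op_hermitian X) :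
  variance (prod_state rho) X <=
    \sum_(i < n) expect (prod_state rho)
                   (opmul (condD rho i X) (condD rho i X)).
Proof.
have rho_her i : op_hermitian (rho i) by have [] := hrho i.
have rho_psd i : op_psd (rho i) by have [_ []] := hrho i.
have rho_tr i : \tr (rho i) = 1 by have [_ []] := hrho i.
exact: variance_le_sum_condD.
Qed.
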